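(* Let $n=2$, let $H$ be a constant with $|H|<1$, and let $\varphi\in C^5((-1,1))$. Write points of $\mathbb R^2$ as $(x_1,x_2)$ and let $$Q(u)=\Delta u-\frac{u_iu_j}{1+|Du|^2}u_{ij}-\frac{2}{x_2}\Big(u_2-H\sqrt{1+|Du|^2}\Big).$$ Suppose $c_1,c_2,c_{3,1}\in C^2((-1,1))$ are functions of $x_1$ such that, for $$u_*=\varphi(x_1)+c_1(x_1)x_2+c_2(x_1)x_2^2+c_{3,1}(x_1)x_2^3\log x_2,$$ one has $Q(u_* )(x_1,x_2)=o(x_2)$ as $x_2\to0^+$ for each $x_1\in(-1,1)$. Then $c_{3,1}\equiv0$.
   Context: Subscripts denote partial derivatives and repeated indices are summed over $1,2$. The functions $c_1,c_2,c_{3,1}$ are the coefficients of the formal boundary expansion of solutions of $Q(u)=0$ with $u=\varphi$ on $\{x_2=0\}$; they are determined by requiring that the coefficients of $x_2^{-1}$, $x_2^0$ and $x_2^1$ in the expansion of $Q(u_* )$ vanish (in particular $c_1=\frac{H}{\sqrt{1-H^2}}\sqrt{1+\varphi'^2}$). *)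

From Stdlib Require Import Reals.
From Coquelicot Require Import Coquelicot.
Open Scope R_scope.

Definition Ck_on (k : nat) (f : R -> R) (a b : R) : Prop :=
  forall x, a < x < b ->
    (forall m, (m <= k)%nat -> ex_derive_n f m x) /\
    continuous (Derive_n f k) x.

Definition ustar (phi c1 c2 c31 : R -> R) (x1 x2 : R) : R :=
  phi x1 + c1 x1 * x2 + c2 x1 * x2 ^ 2 + c31 x1 * x2 ^ 3 * ln x2.

Definition Qop (H : R) (u : R -> R -> R) (x1 x2 : R) : R :=
  let u1  := Derive (fun s => u s x2) x1 in
  let u2  := Derive (fun t => u x1 t) x2 in
  let u11 := Derive (fun s => Derive (fun s' => u s' x2) s) x1 in
  let u22 := Derive (fun t => Derive (fun t' => u x1 t') t) x2 in
  let u12 := Derive (fun t => Derive (fun s => u s t) x1) x2 in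
  let u21 := Derive (fun s => Derive (fun t => u s t) x2) x1 in
  let W := 1 + u1 ^ 2 + u2 ^ 2 in
  (u11 + u22)
  - (u1 * u1 * u11 + u1 * u2 * u12 + u2 * u1 * u21 + u2 * u2 * u22) / W
  - 2 / x2 * (u2 - H * sqrt W).

(* Along a line x1 = const, every derivative of u_* entering Q is a polynomial in x2 and
   tau = x2 ln x2 whose coefficients are derivatives of phi', c1, c2, c31 at x1, and tau -> 0.
   The x2^-1 term of Q vanishes iff c1 = H sqrt (1 + phi'^2 + c1^2).  Rationalising
   sqrt W - sqrt W0 then writes Q as Qnum / W + O(x2), with Qnum a polynomial from which tau
   drops out at x2 = 0, so the x2^0 term gives phi'' (1 + c1^2) = 2 c2 (1 + phi'^2).  Both relations
   hold on the whole interval and may be differentiated in x1; eliminating c1', c1'', c2, c2'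
   with them turns the x2^1 coefficient of Q into 3 c31 (1 + phi'^2) / (1 + phi'^2 + c1^2),
   which must vanish. *)

From Stdlib Require Import Reals Lra Lia.
From Coquelicot Require Import Coquelicot.
Open Scope R_scope.

Section FilterlimArith.
Context {T : Type} {F : (T -> Prop) -> Prop} {FF : Filter F}.

Lemma filterlim_add (f g : T -> R) (a b : R) :
  filterlim f F (locally a) -> filterlim g F (locally b) ->
  filterlim (fun x => f x + g x) F (locally (a + b)).
Proof. intros Hf Hg. exact (filterlim_comp_2 f g Rplus Hf Hg (filterlim_plus a b)). Qed.

Lemma filterlim_mul (f g : T -> R) (a b : R) :
  filterlim f F (locally a) -> filterlim g F (locally b) ->
  filterlim (fun x => f x * g x) F (locally (a * b)).
Proof. intros Hf Hg. exact (filterlim_comp_2 f g Rmult Hf Hg (filterlim_mult a b)). Qed.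

Lemma filterlim_sub (f g : T -> R) (a b : R) :
  filterlim f F (locally a) -> filterlim g F (locally b) ->
  filterlim (fun x => f x - g x) F (locally (a - b)).
Proof.
  intros Hf Hg. apply (filterlim_add f (fun x => - g x)); [exact Hf|].
  eapply filterlim_comp; [exact Hg | exact (filterlim_opp b)].
Qed.

Lemma filterlim_div (f g : T -> R) (a b : R) :
  b <> 0 -> filterlim f F (locally a) -> filterlim g F (locally b) ->
  filterlim (fun x => f x / g x) F (locally (a / b)).
Proof.
  intros Hb Hf Hg. apply (filterlim_mul f (fun x => / g x)); [exact Hf|].
  eapply filterlim_comp; [exact Hg|].
  apply (filterlim_Rbar_inv (Finite b)). congruence.
Qed.

Lemma filterlim_sqrt (f : T -> R) (a : R) :
  filterlim f F (locally a) -> filterlim (fun x => sqrt (f x)) F (locally (sqrt a)).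
Proof. intros Hf. eapply filterlim_comp; [exact Hf | exact (continuous_sqrt a)]. Qed.

Lemma filterlim_pow (f : T -> R) (a : R) (n : nat) :
  filterlim f F (locally a) -> filterlim (fun x => f x ^ n) F (locally (a ^ n)).
Proof.
  intros Hf. induction n as [|n IH]; simpl.
  - apply filterlim_const.
  - exact (filterlim_mul f (fun x => f x ^ n) a (a ^ n) Hf IH).
Qed.

End FilterlimArith.

Lemma filterlim_eq_value {T : Type} {F : (T -> Prop) -> Prop} (f : T -> R) (a b : R) :
  filterlim f F (locally a) -> a = b -> filterlim f F (locally b).
Proof. intros Hf <-. exact Hf. Qed.

Lemma filterlim_id_at_right_0 : filterlim (fun t => t) (at_right 0) (locally 0).
Proof. intros P [e He]. exists e. intros t Ht _. exact (He t Ht). Qed.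

Lemma filterlim_xlnx_at_right_0 : filterlim (fun t => t * ln t) (at_right 0) (locally 0).
Proof.
  apply (filterlim_ext_loc (fun t => - (ln (/ t) / / t))).
  - exists (mkposreal 1 Rlt_0_1). intros t _ Ht. rewrite ln_Rinv by exact Ht. field. lra.
  - replace (locally 0) with (locally (- 0)) by (rewrite Ropp_0; reflexivity).
    eapply filterlim_comp; [|exact (filterlim_opp 0)].
    apply (filterlim_comp _ _ _ Rinv (fun u => ln u / u) _ (Rbar_locally p_infty)).
    + exact filterlim_Rinv_0_right.
    + exact is_lim_div_ln_p.
Qed.

Lemma at_right_0_pos : at_right 0 (fun t => 0 < t).
Proof. exists (mkposreal 1 Rlt_0_1). intros t _ Ht. exact Ht. Qed.

Lemma filterlim_at_right_0_unique (f : R -> R) (a b : R) :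
  filterlim f (at_right 0) (locally a) -> filterlim f (at_right 0) (locally b) -> a = b.
Proof. intros Ha Hb. exact (filterlim_locally_unique (F := at_right 0) f a b Ha Hb). Qed.

(** * Polynomials in x2 and x2 ln x2 *)

Inductive poly2 : Type :=
  | Pc : R -> poly2
  | Px : poly2
  | Py : poly2
  | Padd : poly2 -> poly2 -> poly2
  | Pmul : poly2 -> poly2 -> poly2.

Declare Scope poly2_scope.
Delimit Scope poly2_scope with P.
Bind Scope poly2_scope with poly2.
Coercion Pc : R >-> poly2.
Infix "+" := Padd : poly2_scope.
Infix "*" := Pmul : poly2_scope.
Notation "a - b" := (Padd a (Pmul (Pc (-1)) b)) : poly2_scope.

Fixpoint peval (P : poly2) (x y : R) : R :=
  match P with
  | Pc c => c
  | Px => x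
  | Py => y
  | Padd P1 P2 => peval P1 x y + peval P2 x y
  | Pmul P1 P2 => peval P1 x y * peval P2 x y
  end.

Fixpoint pat0 (P : poly2) : poly2 :=
  match P with
  | Px => Pc 0
  | Padd P1 P2 => Padd (pat0 P1) (pat0 P2)
  | Pmul P1 P2 => Pmul (pat0 P1) (pat0 P2)
  | _ => P
  end.

Fixpoint pslope (P : poly2) : poly2 :=
  match P with
  | Pc _ | Py => Pc 0
  | Px => Pc 1
  | Padd P1 P2 => Padd (pslope P1) (pslope P2)
  | Pmul P1 P2 => Padd (Pmul (pslope P1) P2) (Pmul (pat0 P1) (pslope P2))
  end.

Lemma peval_pat0 (P : poly2) (x y : R) : peval (pat0 P) x y = peval P 0 y.
Proof. induction P; simpl; congruence. Qed.

Lemma peval_slope (P : poly2) (x y : R) : peval P x y = peval P 0 y + x * peval (pslope P) x y.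
Proof.
  induction P as [c| | |P1 IH1 P2 IH2|P1 IH1 P2 IH2]; simpl; try ring.
  - rewrite IH1, IH2; ring.
  - rewrite peval_pat0, IH1, IH2; ring.
Qed.

Lemma filterlim_peval {T : Type} {F : (T -> Prop) -> Prop} {FF : Filter F}
    (P : poly2) (fx fy : T -> R) (a b : R) :
  filterlim fx F (locally a) -> filterlim fy F (locally b) ->
  filterlim (fun z => peval P (fx z) (fy z)) F (locally (peval P a b)).
Proof.
  intros Hx Hy. induction P; simpl.
  - apply filterlim_const.
  - exact Hx.
  - exact Hy.
  - apply filterlim_add; assumption.
  - apply filterlim_mul; assumption.
Qed.

Ltac filterlim_arith :=
  lazymatch goal with
  | |- filterlim (fun t => @?f t + @?g t) _ _ =>
      apply (filterlim_add f g); filterlim_arith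
  | |- filterlim (fun t => @?f t - @?g t) _ _ =>
      apply (filterlim_sub f g); filterlim_arith
  | |- filterlim (fun t => @?f t * @?g t) _ _ =>
      apply (filterlim_mul f g); filterlim_arith
  | |- filterlim (fun t => @?f t / @?g t) _ _ =>
      apply (filterlim_div f g); [| filterlim_arith | filterlim_arith]
  | |- filterlim (fun t => @?f t ^ _) _ _ => apply (filterlim_pow f); filterlim_arith
  | |- filterlim (fun t => sqrt (@?f t)) _ _ => apply (filterlim_sqrt f); filterlim_arith
  | |- filterlim (fun t => peval _ t _) _ _ =>
      apply filterlim_peval; [apply filterlim_id_at_right_0 | eassumption]
  | |- filterlim (fun t => t) _ _ => apply filterlim_id_at_right_0
  | |- filterlim (fun t => _) _ _ => apply filterlim_const
  end.

(** * The expansion of Q along a boundary jet *)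

(* The values at a point x1 of phi', phi'' and of c1, c2, c31 with their first two
   derivatives; below they are written (p, q, r, s) = (phi', c1, c2, c31), primes being
   x1-derivatives. *)
Record jet := Jet {
  jp : R; jp' : R;
  jq : R; jq' : R; jq'' : R;
  jr : R; jr' : R; jr'' : R;
  js : R; js' : R; js'' : R }.

Section Expansion.
Variable j : jet.
Local Notation p := (jp j). Local Notation p' := (jp' j).
Local Notation q := (jq j). Local Notation q' := (jq' j). Local Notation q'' := (jq'' j).
Local Notation r := (jr j). Local Notation r' := (jr' j). Local Notation r'' := (jr'' j).
Local Notation s := (js j). Local Notation s' := (js' j). Local Notation s'' := (js'' j).

(* The derivatives of u_* at (x1, x2), with Px standing for x2 and Py for x2 ln x2. *)
Definition u1 : poly2 := p + q' * Px + r' * Px * Px + s' * Px * Px * Py.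
Definition u2 : poly2 := q + 2 * r * Px + 3 * s * Px * Py + s * Px * Px.
Definition u11 : poly2 := p' + q'' * Px + r'' * Px * Px + s'' * Px * Px * Py.
Definition u12 : poly2 := q' + 2 * r' * Px + 3 * s' * Px * Py + s' * Px * Px.
Definition u22 : poly2 := 2 * r + 6 * s * Py + 5 * s * Px.
Definition lap : poly2 := u11 + u22.
Definition W : poly2 := 1 + u1 * u1 + u2 * u2.
Definition hessDu : poly2 := u1 * u1 * u11 + 2 * u1 * u2 * u12 + u2 * u2 * u22.
Definition W0 : R := 1 + p ^ 2 + q ^ 2.
Definition kappa : R := q / W0.
(* Once q = H sqrt W0, Q = Qnum / W - x2 kappa (pslope W)^2 / (sqrt W + sqrt W0)^2
   (Qjet_decomp), and Qnum (0, y) does not depend on y: the logarithmic terms cancel at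
   order x2^0. *)
Definition Qnum : poly2 := W * lap - hessDu - 2 * pslope u2 * W + kappa * pslope W * W.
Definition coeff1 : R :=
  peval (pslope Qnum) 0 0 / W0 - kappa * peval (pslope W) 0 0 ^ 2 / (4 * W0).

Lemma W0_pos : 0 < W0.
Proof. unfold W0. pose proof (pow2_ge_0 p). pose proof (pow2_ge_0 q). lra. Qed.

Lemma W_pos (x y : R) : 0 < peval W x y.
Proof.
  unfold W; cbn [peval].
  pose proof (Rle_0_sqr (peval u1 x y)). pose proof (Rle_0_sqr (peval u2 x y)).
  unfold Rsqr in *. lra.
Qed.

Lemma W_at0 (y : R) : peval W 0 y = W0.
Proof. unfold W0; simpl. ring. Qed.

Lemma u2_at0 (y : R) : peval u2 0 y = q.
Proof. simpl. ring. Qed.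

Lemma peval_Qnum (x y : R) :
  peval Qnum x y = peval W x y * peval lap x y - peval hessDu x y
    - 2 * peval (pslope u2) x y * peval W x y
    + kappa * peval (pslope W) x y * peval W x y.
Proof. unfold Qnum; cbn [peval]. ring. Qed.

Lemma Qnum_at0 (y : R) : peval Qnum 0 y = p' * (1 + q ^ 2) - 2 * r * (1 + p ^ 2).
Proof. pose proof W0_pos. unfold Qnum, kappa; simpl. unfold W0 in *. field. lra. Qed.

Lemma log_coeff_eq0 (P3 : R) :
  q' * (1 + p ^ 2) = q * p * p' ->
  q'' * (1 + p ^ 2) + q' * (2 * p * p') = q' * p * p' + q * p' * p' + q * p * P3 ->
  p' * (1 + q ^ 2) = 2 * r * (1 + p ^ 2) ->
  P3 * (1 + q ^ 2) + p' * (2 * q * q') = 2 * r' * (1 + p ^ 2) + 2 * r * (2 * p * p') ->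
  coeff1 = 0 -> s = 0.
Proof.
  intros R1 R2 J2 R4 C1.
  enough (E : coeff1 = 3 * s * (1 + p ^ 2) / W0).
  { pose proof W0_pos. pose proof (pow2_ge_0 p). rewrite E in C1.
    apply (f_equal (Rmult W0)) in C1. field_simplify in C1; nra. }
  clear C1.
  unfold coeff1, Qnum, kappa, W0; simpl.
  destruct j as [p0 p1 q0 q1 q2 r0 r1 r2 s0 s1 s2].
  cbn [jp jp' jq jq' jq'' jr jr' jr'' js js' js''] in *.
  assert (Hp : 1 + p0^2 > 0) by (pose proof (pow2_ge_0 p0); lra).
  assert (Hw : 1 + p0^2 + q0^2 > 0)
    by (pose proof (pow2_ge_0 p0); pose proof (pow2_ge_0 q0); lra).
  assert (E2 : q2 = (q1 * p0 * p1 + q0 * p1 * p1 + q0 * p0 * P3 - q1 * (2 * p0 * p1))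
                    / (1 + p0 ^ 2))
    by (rewrite <- R2; field; lra).
  assert (E4 : r1 = (P3 * (1 + q0 ^ 2) + p1 * (2 * q0 * q1) - 2 * r0 * (2 * p0 * p1))
                    / (2 * (1 + p0 ^ 2)))
    by (rewrite R4; field; lra).
  assert (E1 : q1 = q0 * p0 * p1 / (1 + p0 ^ 2)) by (rewrite <- R1; field; lra).
  assert (E3 : r0 = p1 * (1 + q0 ^ 2) / (2 * (1 + p0 ^ 2))) by (rewrite J2; field; lra).
  subst q2 r1; subst q1 r0.
  field. lra.
Qed.

Variables (H : R) (y : R -> R).
(* y stands for x2 ln x2; only y -> 0 is used. *)
Hypothesis y_cvg : filterlim y (at_right 0) (locally 0).

Local Notation "P .[ t ]" := (peval P t (y t))
  (at level 2, left associativity, format "P .[ t ]").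

Definition Qjet (t : R) : R :=
  lap.[t] - hessDu.[t] / W.[t] - 2 / t * (u2.[t] - H * sqrt W.[t]).

Lemma Qjet_decomp (t : R) :
  0 < t -> q = H * sqrt W0 ->
  Qjet t = Qnum.[t] / W.[t] - t * kappa * (pslope W).[t] ^ 2 / (sqrt W.[t] + sqrt W0) ^ 2.
Proof.
  intros Ht J1.
  pose proof (peval_slope W t (y t)) as EG. rewrite W_at0 in EG.
  pose proof (peval_slope u2 t (y t)) as EU. rewrite u2_at0 in EU.
  pose proof (sqrt_sqrt _ (Rlt_le _ _ (W_pos t (y t)))) as HZ.
  pose proof (sqrt_sqrt _ (Rlt_le _ _ W0_pos)) as HS.
  pose proof (sqrt_lt_R0 _ W0_pos) as HS0. pose proof (sqrt_pos W.[t]) as HZ0.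
  rewrite peval_Qnum. unfold Qjet, kappa.
  set (Z := sqrt W.[t]) in *. set (S0 := sqrt W0) in *.
  assert (EWt : (pslope W).[t] = (Z * Z - S0 * S0) / t) by (rewrite HZ, HS, EG; field; lra).
  assert (EU2 : (pslope u2).[t] = (u2.[t] - q) / t) by (rewrite EU; field; lra).
  assert (HG : 0 < Z * Z) by (rewrite HZ; apply W_pos).
  rewrite EWt, EU2, <- HZ, <- HS, J1. field. repeat split; nra.
Qed.

Hypothesis Qjet_small : filterlim (fun t => Qjet t / t) (at_right 0) (locally 0).

Lemma Qjet_coeff_m1 : q = H * sqrt W0.
Proof.
  pose proof W0_pos as HW.
  set (E := fun t => t * (lap.[t] - hessDu.[t] / W.[t]) - 2 * (u2.[t] - H * sqrt W.[t])).
  assert (L1 : filterlim E (at_right 0) (locally (- 2 * (q - H * sqrt W0)))).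
  { eapply filterlim_eq_value; [unfold E; filterlim_arith|];
      rewrite ?W_at0, ?u2_at0; [lra | ring]. }
  assert (L2 : filterlim E (at_right 0) (locally 0)).
  { apply (filterlim_ext_loc (fun t => t * t * (Qjet t / t))).
    - apply (filter_imp (fun t => 0 < t)); [|exact at_right_0_pos]. intros t Ht.
      pose proof (W_pos t (y t)). unfold E, Qjet. field. lra.
    - eapply filterlim_eq_value;
        [apply (filterlim_mul (fun t => t * t)); [filterlim_arith | exact Qjet_small] | ring]. }
  pose proof (filterlim_at_right_0_unique _ _ _ L1 L2). lra.
Qed.

Lemma Qjet_coeff0 : q = H * sqrt W0 -> p' * (1 + q ^ 2) = 2 * r * (1 + p ^ 2).
Proof.
  intros J1. pose proof W0_pos as HW. pose proof (sqrt_lt_R0 _ HW) as HS.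
  set (E := fun t => Qnum.[t] / W.[t]
                     - t * kappa * (pslope W).[t] ^ 2 / (sqrt W.[t] + sqrt W0) ^ 2).
  assert (L1 : filterlim E (at_right 0)
                 (locally ((p' * (1 + q ^ 2) - 2 * r * (1 + p ^ 2)) / W0))).
  { eapply filterlim_eq_value; [unfold E; filterlim_arith|];
      rewrite ?W_at0, ?Qnum_at0; [| apply pow_nonzero |]; [lra | lra | unfold Rdiv; ring]. }
  assert (L2 : filterlim E (at_right 0) (locally 0)).
  { apply (filterlim_ext_loc (fun t => Qjet t / t * t)).
    - apply (filter_imp (fun t => 0 < t)); [|exact at_right_0_pos]. intros t Ht.
      unfold E. rewrite <- Qjet_decomp by assumption. field. lra.
    - eapply filterlim_eq_value;
        [apply (filterlim_mul (fun t => Qjet t / t)); [exact Qjet_small | filterlim_arith]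
        | ring]. }
  pose proof (filterlim_at_right_0_unique _ _ _ L1 L2) as Hlim.
  apply (f_equal (Rmult W0)) in Hlim. field_simplify in Hlim; lra.
Qed.

Lemma Qjet_coeff1 : q = H * sqrt W0 -> p' * (1 + q ^ 2) = 2 * r * (1 + p ^ 2) -> coeff1 = 0.
Proof.
  intros J1 J2. pose proof W0_pos as HW. pose proof (sqrt_lt_R0 _ HW) as HS.
  pose proof (sqrt_sqrt _ (Rlt_le _ _ HW)) as HS2.
  set (E := fun t => (pslope Qnum).[t] / W.[t]
                     - kappa * (pslope W).[t] ^ 2 / (sqrt W.[t] + sqrt W0) ^ 2).
  assert (L1 : filterlim E (at_right 0) (locally coeff1)).
  { eapply filterlim_eq_value; [unfold E; filterlim_arith|];
      rewrite ?W_at0; [| apply pow_nonzero |]; [lra | lra |].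
    unfold coeff1. replace ((sqrt W0 + sqrt W0) ^ 2) with (4 * (sqrt W0 * sqrt W0)) by ring.
    rewrite HS2. reflexivity. }
  apply (filterlim_at_right_0_unique E); [exact L1|].
  apply (filterlim_ext_loc (fun t => Qjet t / t)); [|exact Qjet_small].
  apply (filter_imp (fun t => 0 < t)); [|exact at_right_0_pos]. intros t Ht.
  pose proof (W_pos t (y t)). pose proof (sqrt_pos W.[t]).
  unfold E. rewrite Qjet_decomp, (peval_slope Qnum), Qnum_at0, J2 by assumption. field.
  repeat split; lra.
Qed.
End Expansion.

Definition jet_at (phi c1 c2 c31 : R -> R) (x : R) : jet :=
  Jet (Derive phi x) (Derive (Derive phi) x)
      (c1 x) (Derive c1 x) (Derive (Derive c1) x)
      (c2 x) (Derive c2 x) (Derive (Derive c2) x)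
      (c31 x) (Derive c31 x) (Derive (Derive c31) x).

Lemma Ck_on_ex_derive {k : nat} (m : nat) {f : R -> R} {a b x : R} :
  Ck_on k f a b -> a < x < b -> (m < k)%nat -> ex_derive (Derive_n f m) x.
Proof. intros Hf Hx Hm. exact (proj1 (Hf x Hx) (S m) Hm). Qed.

Lemma Ck_on_le (k l : nat) (f : R -> R) (a b : R) :
  (l <= k)%nat -> Ck_on k f a b -> Ck_on l f a b.
Proof.
  intros Hlk Hf x Hx. split.
  - intros m Hm. apply (proj1 (Hf x Hx)). lia.
  - destruct (Nat.lt_ge_cases l k) as [Hlt|Hkl].
    + exact (ex_derive_continuous (V := R_NormedModule) _ _
               (Ck_on_ex_derive l Hf Hx Hlt)).
    + replace l with k by lia. exact (proj2 (Hf x Hx)).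
Qed.

Definition ustar_x2 (c1 c2 c31 : R -> R) (x1 x2 : R) : R :=
  c1 x1 + 2 * c2 x1 * x2 + c31 x1 * (3 * x2 ^ 2 * ln x2 + x2 ^ 2).

(* auto_derive writes Derive (fun x => f x) where the goal has Derive f. *)
Ltac eta_reduce :=
  repeat match goal with |- context [fun x : R => ?f x] => change (fun x : R => f x) with f end.

Section UstarDerivatives.
Variables (phi c1 c2 c31 : R -> R) (x1 x2 : R).

Lemma Derive_ustar_x1 :
  ex_derive phi x1 -> ex_derive c1 x1 -> ex_derive c2 x1 -> ex_derive c31 x1 ->
  Derive (fun s => ustar phi c1 c2 c31 s x2) x1
  = ustar (Derive phi) (Derive c1) (Derive c2) (Derive c31) x1 x2.
Proof. intros. apply is_derive_unique. unfold ustar. auto_derive; auto. eta_reduce. ring. Qed.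

Lemma Derive_ustar_x2 :
  0 < x2 -> Derive (fun t => ustar phi c1 c2 c31 x1 t) x2 = ustar_x2 c1 c2 c31 x1 x2.
Proof. intros. apply is_derive_unique. unfold ustar, ustar_x2. auto_derive; [lra|]. field. lra. Qed.

Lemma Derive_ustar_x2_x1 :
  ex_derive c1 x1 -> ex_derive c2 x1 -> ex_derive c31 x1 ->
  Derive (fun s => ustar_x2 c1 c2 c31 s x2) x1
  = ustar_x2 (Derive c1) (Derive c2) (Derive c31) x1 x2.
Proof. intros. apply is_derive_unique. unfold ustar_x2. auto_derive; auto. eta_reduce. ring. Qed.

Lemma Derive_ustar_x2_x2 :
  0 < x2 ->
  Derive (fun t => ustar_x2 c1 c2 c31 x1 t) x2 = 2 * c2 x1 + c31 x1 * (6 * x2 * ln x2 + 5 * x2).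
Proof. intros. apply is_derive_unique. unfold ustar_x2. auto_derive; [lra|]. field. lra. Qed.

End UstarDerivatives.

Lemma Qop_ustar (H : R) (phi c1 c2 c31 : R -> R) (a b x t : R) :
  Ck_on 2 phi a b -> Ck_on 2 c1 a b -> Ck_on 2 c2 a b -> Ck_on 2 c31 a b ->
  a < x < b -> 0 < t ->
  Qop H (ustar phi c1 c2 c31) x t = Qjet (jet_at phi c1 c2 c31 x) H (fun t => t * ln t) t.
Proof.
  intros Hp H1 H2 H3 Hx Ht.
  assert (D0 : forall z, a < z < b ->
            ex_derive phi z /\ ex_derive c1 z /\ ex_derive c2 z /\ ex_derive c31 z).
  { intros z Hz. repeat split; eapply (Ck_on_ex_derive 0); eauto. }
  assert (D1 : ex_derive (Derive phi) x /\ ex_derive (Derive c1) x /\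
               ex_derive (Derive c2) x /\ ex_derive (Derive c31) x).
  { repeat split; eapply (Ck_on_ex_derive 1); eauto. }
  destruct (D0 x Hx) as (e0 & e1 & e2 & e3). destruct D1 as (f0 & f1 & f2 & f3).
  unfold Qop; cbv zeta.
  rewrite (Derive_ext_loc (fun s => Derive (fun s' => ustar phi c1 c2 c31 s' t) s)
             (fun s => ustar (Derive phi) (Derive c1) (Derive c2) (Derive c31) s t)).
  2: { apply (locally_interval _ x a b); [exact (proj1 Hx) | exact (proj2 Hx) |].
       intros z Hz1 Hz2. destruct (D0 z (conj Hz1 Hz2)) as (?&?&?&?).
       apply Derive_ustar_x1; assumption. }
  rewrite (Derive_ext_loc (fun t' => Derive (fun t'' => ustar phi c1 c2 c31 x t'') t')
             (fun t' => ustar_x2 c1 c2 c31 x t')).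
  2: { apply (locally_interval _ t 0 p_infty); [exact Ht | exact I |].
       intros z Hz _. apply Derive_ustar_x2. exact Hz. }
  rewrite (Derive_ext (fun t' => Derive (fun s => ustar phi c1 c2 c31 s t') x)
             (fun t' => ustar (Derive phi) (Derive c1) (Derive c2) (Derive c31) x t'))
    by (intros; apply Derive_ustar_x1; assumption).
  rewrite (Derive_ext (fun s => Derive (fun t' => ustar phi c1 c2 c31 s t') t)
             (fun s => ustar_x2 c1 c2 c31 s t))
    by (intros; apply Derive_ustar_x2; exact Ht).
  rewrite Derive_ustar_x2_x2, !Derive_ustar_x2, Derive_ustar_x2_x1, !Derive_ustar_x1
    by assumption.
  set (J := jet_at phi c1 c2 c31 x).
  set (U1 := ustar (Derive phi) (Derive c1) (Derive c2) (Derive c31) x t).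
  set (U2 := ustar_x2 c1 c2 c31 x t).
  set (U11 := ustar (Derive (Derive phi)) (Derive (Derive c1))
                    (Derive (Derive c2)) (Derive (Derive c31)) x t).
  set (U12 := ustar_x2 (Derive c1) (Derive c2) (Derive c31) x t).
  set (U22 := 2 * c2 x + c31 x * (6 * t * ln t + 5 * t)).
  assert (E1 : peval (u1 J) t (t * ln t) = U1) by (unfold U1, ustar; cbn; ring).
  assert (E2 : peval (u2 J) t (t * ln t) = U2) by (unfold U2, ustar_x2; cbn; ring).
  assert (E11 : peval (u11 J) t (t * ln t) = U11) by (unfold U11, ustar; cbn; ring).
  assert (E12 : peval (u12 J) t (t * ln t) = U12) by (unfold U12, ustar_x2; cbn; ring).
  assert (E22 : peval (u22 J) t (t * ln t) = U22) by (unfold U22; cbn; ring).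
  unfold Qjet, lap, W, hessDu; cbn [peval]. rewrite E1, E2, E11, E12, E22.
  replace (1 + U1 ^ 2 + U2 ^ 2) with (1 + U1 * U1 + U2 * U2) by ring.
  unfold Rdiv. ring.
Qed.

Lemma filterlim_Qjet_of_Qop (H : R) (phi c1 c2 c31 : R -> R) (a b x : R) :
  Ck_on 2 phi a b -> Ck_on 2 c1 a b -> Ck_on 2 c2 a b -> Ck_on 2 c31 a b -> a < x < b ->
  filterlim (fun t => Qop H (ustar phi c1 c2 c31) x t / t) (at_right 0) (locally 0) ->
  filterlim (fun t => Qjet (jet_at phi c1 c2 c31 x) H (fun t => t * ln t) t / t)
    (at_right 0) (locally 0).
Proof.
  intros Hp H1 H2 H3 Hx Hlim. eapply filterlim_ext_loc; [| exact Hlim].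
  apply (filter_imp (fun t => 0 < t)); [|exact at_right_0_pos]. intros t Ht.
  rewrite (Qop_ustar H phi c1 c2 c31 a b x t); auto.
Qed.

(** * The boundary relations differentiated in x1 *)

Lemma is_derive_eq_on_interval (f g : R -> R) (a b x l m : R) :
  (forall z, a < z < b -> f z = g z) -> a < x < b ->
  is_derive f x l -> is_derive g x m -> l = m.
Proof.
  intros Efg Hx Hf Hg.
  apply (is_derive_ext_loc f g) in Hf.
  - rewrite <- (is_derive_unique g x l Hf). exact (is_derive_unique g x m Hg).
  - apply (locally_interval _ x a b); [exact (proj1 Hx) | exact (proj2 Hx) |].
    intros z Hz1 Hz2. exact (Efg z (conj Hz1 Hz2)).
Qed.

Section DerivedRelations.
Variables (a b x : R) (f g h : R -> R).
Hypothesis Hx : a < x < b.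

Lemma c1_rel_derive (H : R) :
  (forall z, a < z < b -> g z = H * sqrt (1 + f z ^ 2 + g z ^ 2)) ->
  ex_derive f x -> ex_derive g x ->
  Derive g x * (1 + f x ^ 2) = g x * f x * Derive f x.
Proof.
  intros Hg ef eg.
  set (Wx := 1 + f x ^ 2 + g x ^ 2).
  assert (HW : 0 < Wx)
    by (unfold Wx; pose proof (pow2_ge_0 (f x)); pose proof (pow2_ge_0 (g x)); lra).
  pose proof (sqrt_lt_R0 _ HW) as HS. pose proof (sqrt_sqrt _ (Rlt_le _ _ HW)) as HS2.
  assert (E : Derive g x = H * (f x * Derive f x + g x * Derive g x) / sqrt Wx).
  { apply (is_derive_eq_on_interval g (fun z => H * sqrt (1 + f z ^ 2 + g z ^ 2)) a b x);
      auto.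
    - apply Derive_correct. exact eg.
    - auto_derive; [repeat split; auto; fold Wx; lra |]. eta_reduce.
      replace (1 + f x * (f x * 1) + g x * (g x * 1)) with Wx by (unfold Wx; ring).
      field. lra. }
  pose proof (Hg x Hx) as Hgx. fold Wx in Hgx.
  assert (E' : Derive g x * (sqrt Wx * sqrt Wx)
               = g x * (f x * Derive f x + g x * Derive g x)).
  { rewrite Hgx at 1. rewrite E at 1. field. lra. }
  rewrite HS2 in E'. unfold Wx in E'. nra.
Qed.

Lemma c1_rel_derive2 :
  (forall z, a < z < b -> Derive g z * (1 + f z ^ 2) = g z * f z * Derive f z) ->
  ex_derive f x -> ex_derive (Derive f) x -> ex_derive g x -> ex_derive (Derive g) x ->
  Derive (Derive g) x * (1 + f x ^ 2) + Derive g x * (2 * f x * Derive f x)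
  = Derive g x * f x * Derive f x + g x * Derive f x * Derive f x
    + g x * f x * Derive (Derive f) x.
Proof.
  intros Hrel ef ef' eg eg'.
  apply (is_derive_eq_on_interval _ _ a b x _ _ Hrel Hx); auto_derive; auto; eta_reduce; ring.
Qed.

Lemma phi2_rel_derive :
  (forall z, a < z < b -> Derive f z * (1 + g z ^ 2) = 2 * h z * (1 + f z ^ 2)) ->
  ex_derive f x -> ex_derive (Derive f) x -> ex_derive g x -> ex_derive h x ->
  Derive (Derive f) x * (1 + g x ^ 2) + Derive f x * (2 * g x * Derive g x)
  = 2 * Derive h x * (1 + f x ^ 2) + 2 * h x * (2 * f x * Derive f x).
Proof.
  intros Hrel ef ef' eg eh.
  apply (is_derive_eq_on_interval _ _ a b x _ _ Hrel Hx); auto_derive; auto; eta_reduce; ring.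
Qed.

End DerivedRelations.

Theorem proposition2p2 (H : R) (phi c1 c2 c31 : R -> R) :
  Rabs H < 1 ->
  Ck_on 5 phi (-1) 1 ->
  Ck_on 2 c1 (-1) 1 -> Ck_on 2 c2 (-1) 1 -> Ck_on 2 c31 (-1) 1 ->
  (forall x1, -1 < x1 < 1 ->
     filterlim (fun x2 => Qop H (ustar phi c1 c2 c31) x1 x2 / x2)
       (at_right 0) (locally 0)) ->
  forall x1, -1 < x1 < 1 -> c31 x1 = 0.
Proof.
  intros _ Hphi Hc1 Hc2 Hc31 Hlim x1 Hx1.
  set (J x := jet_at phi c1 c2 c31 x).
  assert (Hsmall : forall x, -1 < x < 1 ->
            filterlim (fun t => Qjet (J x) H (fun t => t * ln t) t / t) (at_right 0) (locally 0))
    by (intros x Hx; apply (filterlim_Qjet_of_Qop _ _ _ _ _ (-1) 1); auto;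
        exact (Ck_on_le 5 2 phi _ _ ltac:(lia) Hphi)).
  assert (J1 : forall x, -1 < x < 1 -> c1 x = H * sqrt (1 + Derive phi x ^ 2 + c1 x ^ 2))
    by (intros x Hx; exact (Qjet_coeff_m1 _ _ _ filterlim_xlnx_at_right_0 (Hsmall x Hx))).
  assert (J2 : forall x, -1 < x < 1 ->
            Derive (Derive phi) x * (1 + c1 x ^ 2) = 2 * c2 x * (1 + Derive phi x ^ 2))
    by (intros x Hx; exact (Qjet_coeff0 _ _ _ filterlim_xlnx_at_right_0 (Hsmall x Hx) (J1 x Hx))).
  assert (R1 : forall x, -1 < x < 1 ->
            Derive c1 x * (1 + Derive phi x ^ 2) = c1 x * Derive phi x * Derive (Derive phi) x)
    by (intros x Hx; exact (c1_rel_derive (-1) 1 x _ _ Hx H J1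
          (Ck_on_ex_derive 1 Hphi Hx ltac:(lia)) (Ck_on_ex_derive 0 Hc1 Hx ltac:(lia)))).
  pose proof (Ck_on_ex_derive 1 Hphi Hx1 ltac:(lia)) as ephi1.
  pose proof (Ck_on_ex_derive 2 Hphi Hx1 ltac:(lia)) as ephi2.
  pose proof (Ck_on_ex_derive 0 Hc1 Hx1 ltac:(lia)) as ec1.
  apply (log_coeff_eq0 (J x1) (Derive (Derive (Derive phi)) x1)).
  - exact (R1 x1 Hx1).
  - exact (c1_rel_derive2 (-1) 1 x1 _ _ Hx1 R1 ephi1 ephi2 ec1
             (Ck_on_ex_derive 1 Hc1 Hx1 ltac:(lia))).
  - exact (J2 x1 Hx1).
  - exact (phi2_rel_derive (-1) 1 x1 _ _ _ Hx1 J2 ephi1 ephi2 ec1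
             (Ck_on_ex_derive 0 Hc2 Hx1 ltac:(lia))).
  - exact (Qjet_coeff1 _ _ _ filterlim_xlnx_at_right_0 (Hsmall x1 Hx1) (J1 x1 Hx1) (J2 x1 Hx1)).
Qed.
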